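(* Let $H \subset L$ be light-cone regular, let $h_0$ be a minimal element of $H$ with respect to $\le$, and let $H' = H \setminus \{h_0\}$. Then the initial boundaries satisfy $H'_0 = (H_0 \setminus \{h_0\}) \cup \{h_0 - v_N\}$.
   Context: Let $L$ be a finitely generated $\mathbb{Z}$-module and $v_1,\dots,v_N\in L$ distinct elements linearly independent over $\mathbb{Z}_{\ge 0}$ (i.e. $\sum_i a_i v_i=0$ with all $a_i\in\mathbb{Z}_{\ge0}$ forces all $a_i=0$). Let $S=\{\sum_i a_iv_i : a_i\in\mathbb{Z}_{\ge0}\}$ and define the partial order $h_1\le h_2$ iff $h_1-h_2\in S$. Assume $v_N$ is the minimum of $\{0,v_1,\dots,v_N\}$ with respect to $\le$. A nonempty subset $H\subset L$ is light-cone regular if for every $h\in H$ the set $\{h'\in H: h'\le h\}$ is finite and $\{h'\in L: h'\ge h\}\subset H$. The initial boundary of a light-cone regular $H$ is $H_0=\{h\in H:\ h+v_i\notin H\text{ for some }i\}$. (For minimal $h_0$, the set $H\setminus\{h_0\}$ is again light-cone regular, so $H'_0$ is defined.) *)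

From mathcomp Require Import all_boot all_order all_algebra.
Set Implicit Arguments. Unset Strict Implicit. Unset Printing Implicit Defensive.
Import GRing.Theory.
Local Open Scope ring_scope.

Definition fin_gen (L : zmodType) : Prop :=
  exists (n : nat) (g : 'I_n -> L),
    forall x : L, exists c : 'I_n -> int, x = \sum_(i < n) g i *~ c i.

Definition nonneg_indep (L : zmodType) (N : nat) (v : 'I_N -> L) : Prop :=
  forall a : 'I_N -> nat, \sum_(i < N) v i *+ a i = 0 -> forall i, a i = 0%N.

Definition inS (L : zmodType) (N : nat) (v : 'I_N -> L) (x : L) : Prop :=
  exists a : 'I_N -> nat, x = \sum_(i < N) v i *+ a i.

Definition vle (L : zmodType) (N : nat) (v : 'I_N -> L) (h1 h2 : L) : Prop :=
  inS v (h1 - h2).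

Definition finite_pred (L : zmodType) (P : L -> Prop) : Prop :=
  exists s : seq L, forall x, P x -> x \in s.

Definition light_cone_regular (L : zmodType) (N : nat) (v : 'I_N -> L)
    (H : L -> Prop) : Prop :=
  (exists h, H h) /\
  forall h, H h ->
    finite_pred (fun h' => H h' /\ vle v h' h) /\
    (forall h', vle v h h' -> H h').

Definition init_boundary (L : zmodType) (N : nat) (v : 'I_N -> L)
    (H : L -> Prop) : L -> Prop :=
  fun h => H h /\ exists i, ~ H (h + v i).

Definition minimal_in (L : zmodType) (N : nat) (v : 'I_N -> L)
    (H : L -> Prop) (h0 : L) : Prop :=
  H h0 /\ forall h, H h -> vle v h h0 -> h = h0.

From mathcomp Require Import all_boot all_order all_algebra.
From Stdlib Require Import Classical.
Set Implicit Arguments. Unset Strict Implicit. Unset Printing Implicit Defensive.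
Local Open Scope ring_scope.
Import GRing.Theory.

(* If x lies in the initial boundary of H' = H \ {h0} but not in that of H,
   then every x + v_i lies in H and some x + v_i equals h0.  As v_m is below
   every v_i, the element x + v_m lies in H below h0, so it is h0 by
   minimality; hence x = h0 - v_m.  Conversely h0 - v_m lies in H' by upward
   closedness and leaves H' along v_m. *)

Section InitialBoundaryRemoveMinimal.

Variables (L : zmodType) (N : nat) (v : 'I_N -> L).

Lemma sum_gen_mulrn_eq j : \sum_(i < N) v i *+ (i == j) = v j.
Proof.
rewrite (bigD1 j) //= eqxx big1 ?addr0 // => i /negbTE ->.
by rewrite mulr0n.
Qed.

Lemma inS_gen j : inS v (v j).
Proof. by exists (fun i => nat_of_bool (i == j)); rewrite sum_gen_mulrn_eq. Qed.

Lemma nonneg_indep_gen_neq0 j : nonneg_indep v -> v j <> 0.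
Proof.
move=> v_ind vj0; have := v_ind (fun i => nat_of_bool (i == j)).
by rewrite sum_gen_mulrn_eq => /(_ vj0 j); rewrite eqxx.
Qed.

Lemma vle_add2l x a b : vle v a b -> vle v (x + a) (x + b).
Proof. by rewrite /vle [x + a]addrC addrKA. Qed.

Lemma vle_subr_gen h j : vle v h (h - v j).
Proof. by rewrite /vle opprB addrC addrNK; exact: inS_gen. Qed.

Variables (H : L -> Prop) (h0 : L).

Let H' := fun h => H h /\ h <> h0.

Lemma init_boundaryD1 x :
  init_boundary v H x -> x <> h0 -> init_boundary v H' x.
Proof. by case=> Hx [i Hxi] xh0; split=> //; exists i; case. Qed.

Lemma init_boundaryD1_minimal x m :
  minimal_in v H h0 -> (forall i, vle v (v m) (v i)) ->
  init_boundary v H' x -> init_boundary v H x \/ x = h0 - v m.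
Proof.
case=> _ h0_min vm_min [[Hx _] [i H'xi]].
have [Hxm | Hxm] := classic (H (x + v m)); last by left; split=> //; exists m.
have [Hxi | Hxi] := classic (H (x + v i)); last by left; split=> //; exists i.
have xi_h0 : x + v i = h0.
  by have [//|/eqP xi_neq] := eqVneq (x + v i) h0; case: H'xi.
right; apply/eqP; rewrite eq_sym subr_eq eq_sym; apply/eqP/h0_min => //.
by rewrite -xi_h0; apply: vle_add2l.
Qed.

Lemma init_boundaryD1_sub_gen m :
  H h0 -> (forall h, vle v h0 h -> H h) -> v m <> 0 ->
  init_boundary v H' (h0 - v m).
Proof.
move=> Hh0 H_up vm0; split; last by exists m; rewrite subrK; case.
split; first exact/H_up/vle_subr_gen.
by move/eqP; rewrite subr_eq addrC -subr_eq subrr eq_sym => /eqP.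
Qed.

End InitialBoundaryRemoveMinimal.

(* indices 'I_N.+1 = {v_1,...,v_N} with v_N = v ord_max *)
Theorem lemma3p11 (L : zmodType) (N : nat) (v : 'I_N.+1 -> L)
  (Lfg : fin_gen L)
  (v_inj : injective v)
  (v_ind : nonneg_indep v)
  (vN_le0 : vle v (v ord_max) 0)
  (vN_min : forall i, vle v (v ord_max) (v i))
  (H : L -> Prop) (HL : light_cone_regular v H)
  (h0 : L) (h0min : minimal_in v H h0) :
  forall x : L,
    init_boundary v (fun h => H h /\ h <> h0) x <->
    ((init_boundary v H x /\ x <> h0) \/ x = h0 - v ord_max).
Proof.
move=> x; split.
- move=> H'x; have [Hx _] := H'x.
  have [H0x | ->] := init_boundaryD1_minimal h0min vN_min H'x; last by right.
  by left; split; last by case: Hx.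
- case=> [[H0x xh0] | ->]; first exact: init_boundaryD1.
  have [Hh0 _] := h0min.
  apply: init_boundaryD1_sub_gen => //; first exact: (proj2 HL h0 Hh0).2.
  exact: nonneg_indep_gen_neq0.
Qed.
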